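(* Let $n\ge1$ be an integer and let $\underline\psi_1,\dots,\underline\psi_n\in[0,1]$ satisfy $\underline\psi_n\le n/(n+1)$ and \[ \frac{\underline\psi_j}{j}\le\frac{\underline\psi_{j+1}}{j+1}\quad\text{and}\quad \frac{1-\underline\psi_j}{n+1-j}\le\frac{1-\underline\psi_{j+1}}{n-j}\qquad(1\le j\le n-1). \] Then there exists a finite non-empty subset $E$ of $\bar\Delta^{(n+1)}$ such that $\underline\psi_j=\min\psi_j(E)$ for each $j=1,\dots,n$.
   Context: $\bar\Delta^{(n+1)}=\{(a_1,\dots,a_{n+1})\in\mathbb{R}^{n+1}: 0\le a_1\le\cdots\le a_{n+1},\ a_1+\cdots+a_{n+1}=1\}$; for $j=1,\dots,n+1$, $\psi_j\colon\bar\Delta^{(n+1)}\to\mathbb{R}$ is $\psi_j(a_1,\dots,a_{n+1})=a_1+\cdots+a_j$. *)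

From Stdlib Require Import Reals List.
Open Scope R_scope.

Fixpoint sum1 (a : nat -> R) (j : nat) : R :=
  match j with
  | O => 0
  | S k => sum1 a k + a (S k)
  end.

(* Points of Delta-bar^{(n+1)} are represented as a : nat -> R, using
   coordinates a 1, ..., a (n+1) (other values are irrelevant). *)
Definition in_Delta (n : nat) (a : nat -> R) : Prop :=
  0 <= a 1%nat /\
  (forall i : nat, (1 <= i <= n)%nat -> a i <= a (S i)) /\
  sum1 a (S n) = 1.

Definition psi (j : nat) (a : nat -> R) : R := sum1 a j.

Definition is_min_on (E : list (nat -> R)) (f : (nat -> R) -> R) (m : R) : Prop :=
  (exists e, In e E /\ f e = m) /\ (forall e, In e E -> m <= f e).

From Stdlib Require Import Reals List Lra Lia.
Open Scope R_scope.

(* For each j take the point e_j whose first j coordinates equal p_j / j and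
   whose last n + 1 - j coordinates equal (1 - p_j) / (n + 1 - j), so that
   psi_j(e_j) = p_j.  The first monotonicity hypothesis makes the lower level
   p_j / j nondecreasing in j, which gives psi_j(e_i) = j p_i / i >= p_j for
   i >= j; the second makes the upper level nondecreasing, which gives
   psi_j(e_i) = 1 - (n + 1 - j) (1 - p_i) / (n + 1 - i) >= p_j for i < j.
   The bound p_n <= n / (n + 1) ensures that every e_j is nondecreasing. *)

Definition step_point (j : nat) (x y : R) : nat -> R :=
  fun i => if (i <=? j)%nat then x else y.

Lemma sum1_step_point_le j x y k :
  (k <= j)%nat -> sum1 (step_point j x y) k = INR k * x.
Proof.
  induction k as [|k IHk]; intros Hk; cbn [sum1].
  - simpl; ring.
  - rewrite IHk by lia; unfold step_point.
    replace (S k <=? j)%nat with true by (symmetry; apply Nat.leb_le; lia).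
    rewrite S_INR; ring.
Qed.

Lemma sum1_step_point_ge j x y k :
  (j <= k)%nat -> sum1 (step_point j x y) k = INR j * x + INR (k - j) * y.
Proof.
  induction k as [|k IHk]; intros Hk.
  - replace j with 0%nat by lia; simpl; ring.
  - destruct (Nat.eq_dec j (S k)) as [-> | Hne].
    + rewrite sum1_step_point_le, Nat.sub_diag by lia; simpl; ring.
    + cbn [sum1]; rewrite IHk by lia; unfold step_point.
      replace (S k <=? j)%nat with false by (symmetry; apply Nat.leb_gt; lia).
      replace (S k - j)%nat with (S (k - j)) by lia.
      rewrite S_INR; ring.
Qed.

Lemma step_point_in_Delta n j x y :
  (j <= n)%nat -> 0 <= x -> x <= y -> INR j * x + INR (S n - j) * y = 1 ->
  in_Delta n (step_point j x y).
Proof.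
  intros Hjn Hx Hxy Hsum; split; [| split].
  - unfold step_point; destruct (1 <=? j)%nat; lra.
  - intros i _; unfold step_point.
    destruct (i <=? j)%nat eqn:Hi, (S i <=? j)%nat eqn:HSi; try lra.
    apply Nat.leb_gt in Hi; apply Nat.leb_le in HSi; lia.
  - rewrite sum1_step_point_ge by lia; exact Hsum.
Qed.

Lemma nondecreasing_on_interval (f : nat -> R) (a b : nat) :
  (forall k, (a <= k < b)%nat -> f k <= f (S k)) ->
  forall i j, (a <= i)%nat -> (i <= j <= b)%nat -> f i <= f j.
Proof.
  intros Hf i j Hai; induction j as [|j IHj]; intros Hij.
  - replace i with 0%nat by lia; lra.
  - destruct (Nat.eq_dec i (S j)) as [-> | Hne]; [lra |].
    apply Rle_trans with (f j); [apply IHj | apply Hf]; lia.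
Qed.

Lemma le_of_weighted_sum (j m : nat) (x y : R) :
  (0 < m)%nat -> 0 <= x -> INR j * x + INR m * y = 1 -> INR (j + m) * x <= 1 ->
  x <= y.
Proof.
  intros Hm Hx Hsum Hle; rewrite plus_INR in Hle.
  assert (Hm' : 0 < INR m) by (apply lt_0_INR; exact Hm).
  apply Rmult_le_reg_l with (INR m); lra.
Qed.

Definition lower_level (p : nat -> R) (j : nat) : R := p j / INR j.

Definition upper_level (n : nat) (p : nat -> R) (j : nat) : R :=
  (1 - p j) / INR (S n - j).

Definition extremal_point (n : nat) (p : nat -> R) (j : nat) : nat -> R :=
  step_point j (lower_level p j) (upper_level n p j).

Lemma INR_lower_level p j : (1 <= j)%nat -> INR j * lower_level p j = p j.
Proof.
  intros Hj; unfold lower_level.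
  assert (0 < INR j) by (apply lt_0_INR; lia).
  field; lra.
Qed.

Lemma INR_upper_level n p j :
  (j <= n)%nat -> INR (S n - j) * upper_level n p j = 1 - p j.
Proof.
  intros Hj; unfold upper_level.
  assert (0 < INR (S n - j)) by (apply lt_0_INR; lia).
  field; lra.
Qed.

Lemma psi_extremal_point_le n p i j :
  (1 <= j <= i)%nat -> psi j (extremal_point n p i) = INR j * lower_level p i.
Proof. intros; apply sum1_step_point_le; lia. Qed.

Lemma psi_extremal_point_gt n p i j :
  (1 <= i < j)%nat -> (j <= S n)%nat ->
  psi j (extremal_point n p i) = 1 - INR (S n - j) * upper_level n p i.
Proof.
  intros Hij Hjn; unfold psi, extremal_point.
  rewrite sum1_step_point_ge, INR_lower_level by lia.
  pose proof (INR_upper_level n p i ltac:(lia)).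
  replace (INR (j - i)) with (INR (S n - i) - INR (S n - j))
    by (rewrite !minus_INR by lia; ring).
  lra.
Qed.

Section ExtremalPoints.

Variable n : nat.
Variable p : nat -> R.
Hypothesis n_pos : (1 <= n)%nat.
Hypothesis p_nonneg : forall j, (1 <= j <= n)%nat -> 0 <= p j.
Hypothesis p_last : p n <= INR n / INR (S n).
Hypothesis p_slopes : forall j : nat, (1 <= j <= n - 1)%nat ->
  p j / INR j <= p (S j) / INR (S j) /\
  (1 - p j) / INR (S n - j) <= (1 - p (S j)) / INR (n - j).

Lemma lower_level_mono i j :
  (1 <= i)%nat -> (i <= j <= n)%nat -> lower_level p i <= lower_level p j.
Proof.
  apply nondecreasing_on_interval with (a := 1%nat).
  intros k Hk; apply (p_slopes k); lia.
Qed.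

Lemma upper_level_mono i j :
  (1 <= i)%nat -> (i <= j <= n)%nat -> upper_level n p i <= upper_level n p j.
Proof.
  apply nondecreasing_on_interval with (a := 1%nat).
  intros k Hk; apply (p_slopes k); lia.
Qed.

Lemma lower_level_le_inv_succ j :
  (1 <= j <= n)%nat -> INR (S n) * lower_level p j <= 1.
Proof.
  intros Hj.
  assert (0 < INR n) by (apply lt_0_INR; lia).
  assert (0 < INR (S n)) by (apply lt_0_INR; lia).
  apply Rle_trans with (INR (S n) * lower_level p n).
  - apply Rmult_le_compat_l; [lra | apply lower_level_mono; lia].
  - unfold lower_level.
    apply Rmult_le_reg_r with (INR n / INR (S n)); [apply Rdiv_lt_0_compat; lra |].
    replace (INR (S n) * (p n / INR n) * (INR n / INR (S n))) with (p n) by (field; lra).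
    lra.
Qed.

Lemma extremal_point_in_Delta j :
  (1 <= j <= n)%nat -> in_Delta n (extremal_point n p j).
Proof.
  intros Hj.
  assert (Hx : 0 <= lower_level p j).
  { unfold lower_level, Rdiv; apply Rmult_le_pos; [apply p_nonneg; lia |].
    left; apply Rinv_0_lt_compat, lt_0_INR; lia. }
  assert (Hsum : INR j * lower_level p j + INR (S n - j) * upper_level n p j = 1).
  { rewrite INR_lower_level, INR_upper_level by lia; ring. }
  apply step_point_in_Delta; [lia | exact Hx | | exact Hsum].
  apply le_of_weighted_sum with j (S n - j)%nat; [lia | exact Hx | exact Hsum |].
  replace (j + (S n - j))%nat with (S n) by lia.
  apply lower_level_le_inv_succ; exact Hj.
Qed.

Lemma psi_extremal_point_ge i j :
  (1 <= i <= n)%nat -> (1 <= j <= n)%nat -> p j <= psi j (extremal_point n p i).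
Proof.
  intros Hi Hj; destruct (Nat.le_gt_cases j i) as [Hji | Hij].
  - rewrite psi_extremal_point_le, <- (INR_lower_level p j) by lia.
    apply Rmult_le_compat_l; [apply pos_INR | apply lower_level_mono; lia].
  - rewrite psi_extremal_point_gt by lia.
    pose proof (INR_upper_level n p j ltac:(lia)).
    pose proof (upper_level_mono i j ltac:(lia) ltac:(lia)).
    assert (0 <= INR (S n - j)) by apply pos_INR.
    nra.
Qed.

End ExtremalPoints.

Theorem mainTheorem11 (n : nat) (p : nat -> R) :
  (1 <= n)%nat ->
  (forall j : nat, (1 <= j <= n)%nat -> 0 <= p j <= 1) ->
  p n <= INR n / INR (S n) ->
  (forall j : nat, (1 <= j <= n - 1)%nat ->
     p j / INR j <= p (S j) / INR (S j) /\
     (1 - p j) / INR (S n - j) <= (1 - p (S j)) / INR (n - j)) ->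
  exists E : list (nat -> R),
    E <> nil /\
    (forall e, In e E -> in_Delta n e) /\
    (forall j : nat, (1 <= j <= n)%nat -> is_min_on E (psi j) (p j)).
Proof.
  intros Hn Hp Hpn Hslopes.
  assert (Hnonneg : forall j, (1 <= j <= n)%nat -> 0 <= p j) by (intros j Hj; apply Hp, Hj).
  exists (map (extremal_point n p) (seq 1 n)); split; [| split].
  - destruct n; [lia | discriminate].
  - intros e He; apply in_map_iff in He as [i [<- Hi]]; apply in_seq in Hi.
    apply extremal_point_in_Delta; auto; lia.
  - intros j Hj; split.
    + exists (extremal_point n p j); split.
      * apply in_map, in_seq; lia.
      * rewrite psi_extremal_point_le, INR_lower_level by lia; reflexivity.
    + intros e He; apply in_map_iff in He as [i [<- Hi]]; apply in_seq in Hi.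
      apply psi_extremal_point_ge; auto; lia.
Qed.
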